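(* Let $p$ be an odd prime. If $A,B\subseteq\mathbb{F}_p$ satisfy $A+B=P_p$ and $|A|=|B|$, then $$\sqrt{\varphi(p-1)}\le |A|<\sqrt{p}.$$
   Context: $\mathbb{F}_p$ is the finite field with $p$ elements. $P_p$ denotes the set of primitive elements of $\mathbb{F}_p$, i.e. the generators of the cyclic group $\mathbb{F}_p^{\times}$. For $A,B\subseteq\mathbb{F}_p$, $A+B=\{a+b: a\in A,\ b\in B\}$. $\varphi$ is Euler's totient function. *)

From mathcomp Require Import all_boot all_order all_algebra.
Set Implicit Arguments. Unset Strict Implicit. Unset Printing Implicit Defensive.
Import GRing.Theory.
Local Open Scope ring_scope.

Definition sumset (V : finZmodType) (A B : {set V}) : {set V} :=
  [set a + b | a in A, b in B].

(* P_p: primitive elements of F_p, i.e. generators of F_p^x,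
   i.e. primitive (p-1)-th roots of unity. *)
Definition primitive_elems (p : nat) : {set 'F_p} :=
  [set x : 'F_p | (p.-1).-primitive_root x].

From mathcomp Require Import all_boot all_order all_algebra all_fingroup all_solvable all_field.
From mathcomp Require Import zify ring.

(* Primitive roots are non-squares, so chi (a + b) = -1 on A x B, where chi is
   the quadratic character. Let S x = sum_(b in B) chi (x + b). The Jacobsthal
   sums sum_x chi (x + b) chi (x + b') = -1 for b != b' give
   sum_x (S x)^2 = |B| (p - |B|), while the terms with x in A alone contribute
   |A| |B|^2; hence |A| |B| + |B| <= p. The lower bound is the count
   phi(p - 1) = |P_p| <= |A + B| <= |A| |B|. *)
Set Implicit Arguments. Unset Strict Implicit. Unset Printing Implicit Defensive.
Import Order.TTheory GRing.Theory Num.Theory.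
Local Open Scope ring_scope.

Lemma finField_two_neq0 (F : finFieldType) : odd #|F| -> 2%:R != 0 :> F.
Proof.
move=> oddF; apply/eqP => two0.
have /fin_ring_pchar_abelem/abelem_pgroup : 2 \in [pchar F] by rewrite inE two0 eqxx.
rewrite /pgroup cardsT => /p_natP[k cardF].
move: oddF (finNzRing_gt1 F); rewrite cardF oddX orbF => /eqP->.
by rewrite expn0.
Qed.

Section FiniteFieldUnits.
Variable F : finFieldType.
Local Notation q := #|F|.

Lemma expf_card_pred (x : F) : x != 0 -> x ^+ q.-1 = 1.
Proof.
move=> x0; apply: (mulfI x0); rewrite -exprS prednK ?expf_card ?mulr1 //.
exact: ltnW (finNzRing_gt1 F).
Qed.

Lemma finField_prim_root_exists : exists z : F, q.-1.-primitive_root z.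
Proof.
have : has q.-1.-primitive_root (enum (predC1 (0 : F))).
  apply: has_prim_root; last by rewrite -cardE cardC1.
  - by rewrite -ltnS prednK ?finNzRing_gt1 // ltnW ?finNzRing_gt1.
  - by apply/allP => x; rewrite mem_enum unity_rootE => /expf_card_pred->.
  - exact: enum_uniq.
by case/hasP => z _; exists z.
Qed.

Lemma card_finField_prim_root :
  #|[set x : F | q.-1.-primitive_root x]| = totient q.-1.
Proof.
have [z z_prim] := finField_prim_root_exists.
have -> : [set x : F | q.-1.-primitive_root x] =
          (fun k : 'I_q.-1 => z ^+ k) @: [set k : 'I_q.-1 | coprime k q.-1].
  apply/setP => x; rewrite !inE; apply/idP/imsetP => [x_prim | [k]].
    have [k x_def] := prim_rootP z_prim (prim_expr_order x_prim).
    by exists k; rewrite // inE -(prim_root_exp_coprime _ z_prim) -x_def.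
  by rewrite inE => k_coprime ->; rewrite prim_root_exp_coprime.
rewrite card_imset; last first.
  move=> i j /eqP; rewrite (eq_prim_root_expr z_prim) !modn_small // => /eqP.
  exact: val_inj.
rewrite totient_count_coprime big_mkord -sum1_card big_mkcond /=.
by apply: eq_bigr => i _; rewrite inE coprime_sym; case: coprime.
Qed.

End FiniteFieldUnits.

Section QuadraticCharacter.
Variable F : finFieldType.
Hypothesis oddF : odd #|F|.
Local Notation q := #|F|.

Definition qchar (x : F) : int :=
  if x == 0 then 0 else if x ^+ q.-1./2 == 1 then 1 else -1.

Lemma qchar0 : qchar 0 = 0.
Proof. by rewrite /qchar eqxx. Qed.

Lemma qchar1 : qchar 1 = 1.
Proof. by rewrite /qchar oner_eq0 expr1n eqxx. Qed.

Lemma qchar_sqr (x : F) : x != 0 -> qchar x ^+ 2 = 1.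
Proof. by rewrite /qchar => /negPf->; case: ifP. Qed.

Lemma halfK_card_pred : (q.-1./2).*2 = q.-1.
Proof. by rewrite even_halfK // -oddS prednK // ltnW ?finNzRing_gt1. Qed.

Lemma expf_half_card_pred (x : F) :
  x != 0 -> (x ^+ q.-1./2 == 1) || (x ^+ q.-1./2 == -1).
Proof.
move=> x0; rewrite -sqrf_eq1 -exprM muln2 halfK_card_pred.
by rewrite expf_card_pred.
Qed.

Lemma qcharM (x y : F) : qchar (x * y) = qchar x * qchar y.
Proof.
have N1_neq1 : -1 != 1 :> F.
  by rewrite -subr_eq0 -opprD oppr_eq0 (finField_two_neq0 oddF).
rewrite /qchar mulf_eq0; have [->|x0] := eqVneq x 0; first by rewrite /= mul0r.
have [->|y0] := eqVneq y 0; first by rewrite orbT mulr0.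
rewrite exprMn.
by case/orP: (expf_half_card_pred x0) => /eqP->;
   case/orP: (expf_half_card_pred y0) => /eqP->;
   rewrite ?mulr1 ?mul1r ?mulrNN ?mulr1 ?eqxx ?(negPf N1_neq1).
Qed.

(* A generator of F^* has order q - 1, so its (q - 1)/2-th power is not 1. *)
Lemma qchar_prim_root (z : F) : q.-1.-primitive_root z -> qchar z = -1.
Proof.
move=> z_prim; rewrite /qchar (prim_root_eq0 z_prim).
have q_gt2 : (2 < q)%N by move: oddF (finNzRing_gt1 F); case: q => [|[|[|]]].
have -> : (q.-1 == 0)%N = false by lia.
rewrite -(prim_order_dvd z_prim); have := halfK_card_pred.
case: ifP => // /dvdn_leq; lia.
Qed.

Lemma sum_qchar : \sum_x qchar x = 0.
Proof.
have [z z_prim] := finField_prim_root_exists F.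
have q_gt1 : (1 < q)%N := finNzRing_gt1 F.
have z0 : z != 0 by rewrite (prim_root_eq0 z_prim); lia.
have : \sum_x qchar x = \sum_x qchar (z * x) := reindex_inj (mulfI z0).
under [X in _ = X -> _]eq_bigr => x _ do rewrite qcharM qchar_prim_root //.
rewrite -mulr_sumr; set S := \sum_x _; lia.
Qed.

(* Jacobsthal: y (y + c) = y^2 (1 + c / y), and y |-> 1 + c / y is a bijection
   from F^* onto F \ {1}. *)
Lemma sum_qchar_mulD (c : F) : c != 0 -> \sum_y qchar (y * (y + c)) = -1.
Proof.
move=> c0; have sum_shifted : \sum_(y | y != 0) qchar (1 + c * y^-1) = -1.
  have := sum_qchar; rewrite (reindex_inj (_ : injective (fun y => 1 + c * y^-1))).
    by rewrite (bigD1 0) //= invr0 mulr0 addr0 qchar1; set S := \sum_(_ | _) _; lia.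
  by move=> a b /addrI /(mulfI c0) /invr_inj.
rewrite (bigD1 0) //= mul0r qchar0 add0r -sum_shifted; apply: eq_bigr => y y0.
have -> : y * (y + c) = y ^+ 2 * (1 + c * y^-1) by field.
by rewrite qcharM exprS expr1 qcharM -expr2 qchar_sqr // mul1r.
Qed.

Lemma sum_qcharD_sqr (b : F) : \sum_x qchar (x + b) ^+ 2 = q.-1%:R.
Proof.
rewrite (reindex_inj (addIr (- b))) /=; under eq_bigr do rewrite addrNK.
rewrite (bigD1 0) //= qchar0 expr0n add0r (eq_bigr (fun _ => 1)) => [|x /qchar_sqr//].
by rewrite sumr_const -(cardC1 0).
Qed.

Lemma sum_qcharMD (b b' : F) : b != b' ->
  \sum_x qchar (x + b) * qchar (x + b') = -1.
Proof.
move=> neq_bb'; have c0 : b' - b != 0 by rewrite subr_eq0 eq_sym.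
rewrite (reindex_inj (addIr (- b))) /= -(sum_qchar_mulD c0).
by apply: eq_bigr => x _; rewrite addrNK -qcharM addrAC -addrA.
Qed.

Lemma sum_qcharMD_set (B : {set F}) (b : F) : b \in B ->
  \sum_(b' in B) \sum_x qchar (x + b) * qchar (x + b') = q%:R - #|B|%:R.
Proof.
move=> bB; rewrite (bigD1 b) //= -(eq_bigr _ (fun x _ => expr2 _)) sum_qcharD_sqr.
rewrite (eq_bigr (fun _ => -1)) => [|b' /andP[_ /negPf]]; last first.
  by rewrite eq_sym => /negbT/sum_qcharMD.
rewrite sumr_const mulNrn; set k := #|_|.
have -> : #|B| = k.+1.
  by rewrite (cardD1 b B) bB; congr _.+1; apply: eq_card => x; rewrite !inE andbC.
have q_gt0 : (0 < q)%N := ltnW (finNzRing_gt1 F).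
by rewrite -[in RHS](prednK q_gt0) -!natr1 opprD addrACA subrr addr0.
Qed.

Lemma sum_qcharD_set_sqr (B : {set F}) :
  \sum_x (\sum_(b in B) qchar (x + b)) ^+ 2 = #|B|%:R * (q%:R - #|B|%:R).
Proof.
under eq_bigr => x _ do rewrite expr2 mulr_suml; rewrite exchange_big /=.
under eq_bigr => b _ do (under eq_bigr => x _ do rewrite mulr_sumr; rewrite exchange_big /=).
by rewrite (eq_bigr _ (fun b => @sum_qcharMD_set B b)) sumr_const mulr_natl.
Qed.

(* In the sum above, each term with x in A alone is |B|^2. *)
Lemma card_nonsquare_sumset (A B : {set F}) :
  {in A & B, forall a b, qchar (a + b) = -1} -> (#|A| * #|B| + #|B| <= q)%N.
Proof.
move=> nonsq; have [B0|B_gt0] := posnP #|B|; first by rewrite B0 muln0.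
have : (#|A| * #|B| ^ 2)%:R <= #|B|%:R * (q%:R - #|B|%:R) :> int.
  rewrite -sum_qcharD_set_sqr (bigID (mem A)) /= -[leLHS]addr0 lerD ?sumr_ge0 //.
    rewrite natrM -[#|A|]sum1_card natr_sum mulr_suml ler_sum // => a aA.
    rewrite (eq_bigr (fun _ => -1)) => [|b bB]; last exact: nonsq.
    by rewrite sumr_const mulNrn sqrrN mul1r natrX.
  by move=> x _; rewrite sqr_ge0.
nia.
Qed.

End QuadraticCharacter.

Lemma leq_card_sumset (V : finZmodType) (A B : {set V}) :
  (#|sumset A B| <= #|A| * #|B|)%N.
Proof.
by rewrite /sumset curry_imset2X -cardsX leq_imset_card.
Qed.

Theorem theorem1p3 (p : nat) (A B : {set 'F_p}) :
  prime p -> odd p ->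
  sumset A B = primitive_elems p -> #|A| = #|B| ->
  (totient p.-1 <= #|A| ^ 2 /\ #|A| ^ 2 < p)%N.
Proof.
move=> p_pr p_odd sumAB cardAB; have cardF : #|'F_p| = p := card_Fp p_pr.
split.
  have := card_finField_prim_root 'F_p; rewrite cardF => <-.
  by rewrite -/(primitive_elems p) -sumAB -mulnn {2}cardAB leq_card_sumset.
have oddF : odd #|'F_p| by rewrite cardF.
have nonsq : {in A & B, forall a b, qchar (a + b) = -1}.
  move=> a b aA bB; apply: (qchar_prim_root oddF); rewrite cardF.
  have : a + b \in sumset A B by apply/imset2P; exists a b.
  by rewrite sumAB inE.
have := card_nonsquare_sumset oddF nonsq; rewrite cardF -cardAB.
rewrite -mulnn; case: #|A| => [_|n]; [exact: prime_gt0 | lia].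
Qed.
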